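(* Let $k\ge r\ge 3$ and $t\ge 0$ be integers and let $\pi\in\mathbb{C}(k,r)$ be a partition in which both $2t+1$ and $2t+2$ occur as parts. Then every part equal to $2t+2$ has a mark in $GG(\pi)$ strictly greater than the mark of the part $2t+1$ in $GG(\pi)$.
   Context: A partition $\pi=(\pi_1,\dots,\pi_\ell)$ is a finite non-increasing sequence of positive integers. Göllnitz–Gordon marking: $GG(\pi)$ assigns a positive integer (mark) to each part, processing the parts from smallest to largest ($\pi_\ell,\dots,\pi_1$); $\pi_i$ receives the smallest positive integer different from the marks of all parts $\pi_g$ with $g>i$ and $\pi_i-\pi_g\le 2$, where $\pi_i-\pi_g<2$ is required when $\pi_i$ is odd. $\mathbb{C}(k,r)$: the set of partitions $\pi$ such that (i) no odd part is repeated; (ii) $\pi_i\ge\pi_{i+k-1}+2$ for $1\le i\le\ell-k+1$, with strict inequality if $\pi_i$ is even; (iii) at most $r-1$ parts are $\le 2$. (In particular $2t+1$ occurs at most once, so its mark is well defined.) *)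

From mathcomp Require Import all_boot.
Set Implicit Arguments. Unset Strict Implicit. Unset Printing Implicit Defensive.

(* A partition is a finite non-increasing sequence of positive integers,
   represented as the list [pi_1; ...; pi_l] (index i in the list is pi_(i+1)). *)
Definition is_partition (p : seq nat) : bool :=
  sorted geq p && all (fun x => 0 < x) p.

(* Smallest positive integer not occurring in L (it lies in 1..size L + 1). *)
Definition mex1 (L : seq nat) : nat :=
  head 0 [seq n <- iota 1 (size L).+1 | n \notin L].

(* Goellnitz-Gordon marking, processing parts from the smallest (last) to the
   largest (first).  [GG p] is the list of marks aligned with [p]. *)
Fixpoint GG (p : seq nat) : seq nat :=
  match p with
  | [::] => [::]
  | x :: p' =>
      let m' := GG p' in
      mex1 [seq yz.2 | yz <- zip p' m' &
              (x - yz.1 <= 2) && (odd x ==> (x - yz.1 < 2))] :: m'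
  end.

(* The set C(k, r). Indices are 0-based: condition (ii) for
   1 <= i <= l-k+1 becomes i + k - 1 < l for 0-based i. *)
Definition in_C (k r : nat) (p : seq nat) : Prop :=
  [/\ is_partition p,
      (forall x, odd x -> count_mem x p <= 1),
      (forall i, i + k - 1 < size p ->
         if odd (nth 0 p i) then nth 0 p (i + k - 1) + 2 <= nth 0 p i
         else nth 0 p (i + k - 1) + 2 < nth 0 p i)
    & count (fun x => x <= 2) p <= r - 1].

(* A part 2t+1 sees the later parts y with 2t+1 - y < 2, and every such y
   satisfies 2t+2 - y <= 2, so it is also seen by any part 2t+2; since π is
   non-increasing, a part 2t+2 moreover sees the part 2t+1 itself.  Hence the
   marks a part 2t+2 must avoid include those avoided by 2t+1 together with the
   mark of 2t+1, and its least available mark is strictly larger. *)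

From mathcomp Require Import all_boot.
From mathcomp Require Import zify.

Lemma head_filter (T : Type) (x0 : T) (a : pred T) (s : seq T) :
  head x0 (filter a s) = nth x0 s (find a s).
Proof. by elim: s => //= y s IHs; case: (a y). Qed.

Lemma map_filter_iotaS (T : Type) (f : nat -> T) (a : pred nat) (m n : nat) :
  [seq f l | l <- iota m.+1 n & a l] = [seq f l.+1 | l <- iota m n & a l.+1].
Proof. by rewrite -add1n iotaDl filter_map -map_comp. Qed.

Lemma map_filter_zip (S T : Type) (x0 : S) (y0 : T) (a : pred S)
    (s : seq S) (t : seq T) :
  size s = size t ->
  [seq yz.2 | yz <- zip s t & a yz.1] =
  [seq nth y0 t l | l <- iota 0 (size s) & a (nth x0 s l)].
Proof.
elim: s t => [|x s IHs] [|y t] //= [st].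
rewrite -[1]addn0 iotaDl filter_map.
by case: (a x); rewrite /= (IHs t st) -map_comp.
Qed.

Section Mex.

Variable L : seq nat.

Let notinL := fun n : nat => n \notin L.

Lemma has_notin_iota : has notinL (iota 1 (size L).+1).
Proof.
apply: contraT => /hasPn inL.
have := uniq_leq_size (iota_uniq 1 (size L).+1) (fun n Hn => negbNE (inL n Hn)).
by rewrite size_iota ltnn.
Qed.

Lemma find_notin_iota : find notinL (iota 1 (size L).+1) < (size L).+1.
Proof. by have := has_notin_iota; rewrite has_find size_iota. Qed.

Lemma mex1E : mex1 L = (find notinL (iota 1 (size L).+1)).+1.
Proof. by rewrite /mex1 head_filter nth_iota ?find_notin_iota. Qed.

Lemma mex1_gt0 : 0 < mex1 L.
Proof. by rewrite mex1E. Qed.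

Lemma mex1_notin : mex1 L \notin L.
Proof.
by have := nth_find 0 has_notin_iota; rewrite nth_iota ?find_notin_iota // mex1E.
Qed.

Lemma mem_lt_mex1 n : 0 < n < mex1 L -> n \in L.
Proof.
case: n => // n /andP[_]; rewrite mex1E ltnS => lt_n.
have := before_find 0 lt_n; rewrite nth_iota => [/negbFE //|].
exact: ltn_trans lt_n find_notin_iota.
Qed.

End Mex.

Lemma mex1_lt (L1 L2 : seq nat) :
  {subset L1 <= L2} -> mex1 L1 \in L2 -> mex1 L1 < mex1 L2.
Proof.
move=> sub12 mex1_in; rewrite ltn_neqAle; apply/andP; split.
  by apply: contraNneq (mex1_notin L2) => <-.
rewrite leqNgt; apply: contraNN (mex1_notin L2) => lt21.
by apply/sub12/mem_lt_mex1; rewrite mex1_gt0.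
Qed.

Definition gg_adj (x y : nat) : bool := (x - y <= 2) && (odd x ==> (x - y < 2)).

Definition gg_marks (p : seq nat) (i : nat) : seq nat :=
  [seq nth 0 (GG p) l | l <- iota i.+1 (size p - i.+1)
                      & gg_adj (nth 0 p i) (nth 0 p l)].

Lemma size_GG (p : seq nat) : size (GG p) = size p.
Proof. by elim: p => //= x p ->. Qed.

Lemma nth_GG (p : seq nat) (i : nat) :
  i < size p -> nth 0 (GG p) i = mex1 (gg_marks p i).
Proof.
elim: p i => [|x p IHp] [|i] //= lt_i.
  by rewrite /gg_marks map_filter_iotaS subn1
             (@map_filter_zip _ _ 0 0 (gg_adj x)) ?size_GG.
by rewrite (IHp i lt_i) /gg_marks [in RHS]map_filter_iotaS.
Qed.

Lemma mem_gg_marks (p : seq nat) (i l : nat) :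
  i < l < size p -> gg_adj (nth 0 p i) (nth 0 p l) ->
  nth 0 (GG p) l \in gg_marks p i.
Proof.
move=> /andP[lt_il lt_l] adj_il; apply: map_f.
by rewrite mem_filter adj_il mem_iota; apply/andP; split; lia.
Qed.

Lemma sub_gg_marks (p : seq nat) (i j : nat) :
  i < j -> (forall y, gg_adj (nth 0 p j) y -> gg_adj (nth 0 p i) y) ->
  {subset gg_marks p j <= gg_marks p i}.
Proof.
move=> lt_ij adj_ji v /mapP[l]; rewrite mem_filter mem_iota.
move=> /andP[adj_jl /andP[lt_jl lt_l]] ->.
by apply: mem_gg_marks; [apply/andP; split; lia | apply: adj_ji].
Qed.

Lemma gg_adj_odd_even (t y : nat) : gg_adj t.*2.+1 y -> gg_adj t.*2.+2 y.
Proof. by rewrite /gg_adj /= odd_double /= !andbT => /andP[_ lt_y]; lia. Qed.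

Lemma gg_adj_even_odd (t : nat) : gg_adj t.*2.+2 t.*2.+1.
Proof. by rewrite /gg_adj /= odd_double /= andbT; lia. Qed.

Lemma sorted_geq_index_lt {p : seq nat} {i j : nat} :
  sorted geq p -> i < size p -> j < size p -> nth 0 p j < nth 0 p i -> i < j.
Proof.
move=> p_sorted lt_i lt_j; apply: contraTT; rewrite -leqNgt -leqNgt => le_ji.
exact: (sorted_leq_nth (rev_trans leq_trans) leqnn 0 p_sorted).
Qed.

Theorem lemma2p10 (k r t : nat) (p : seq nat) :
  3 <= r -> r <= k -> in_C k r p ->
  t.*2.+1 \in p -> t.*2.+2 \in p ->
  forall i, i < size p -> nth 0 p i = t.*2.+2 ->
    nth 0 (GG p) (index t.*2.+1 p) < nth 0 (GG p) i.
Proof.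
move=> _ _ [/andP[p_sorted _] _ _ _] p_odd _ i lt_i p_i.
set j := index t.*2.+1 p.
have lt_j : j < size p by rewrite index_mem.
have p_j : nth 0 p j = t.*2.+1 by apply: nth_index.
have lt_ij : i < j by apply: (sorted_geq_index_lt p_sorted) => //; rewrite p_i p_j.
rewrite !nth_GG //; apply: mex1_lt.
  by apply: sub_gg_marks => // y; rewrite p_i p_j; apply: gg_adj_odd_even.
by rewrite -nth_GG // mem_gg_marks ?lt_ij // p_i p_j gg_adj_even_odd.
Qed.
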